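(* Let $H$ be a real symmetric positive definite $d\times d$ matrix and $L$ a real $d\times d$ matrix with $L^TH+HL=0$. Consider an $s$-stage explicit Runge–Kutta method ($s\ge 4$) applied to $\frac{d}{dt}u=Lu$, i.e. $u_{n+1}=G_s u_n$ with $G_s=\sum_{k=0}^s a_k (hL)^k$, $a_0=1$, $a_s\neq0$, $h>0$, and suppose the method is of fourth order, i.e. $a_k=1/k!$ for $k=1,2,3,4$. Suppose that $b_k=0$ for all $3\le k\le s-2$ and that $b_{s-1}=a_{s-1}^2-2a_sa_{s-2}<0$. Then the order of energy accuracy is $r=2s-3$. Furthermore, the method is strongly stable (i.e. $\|u_{n+1}\|_H\le\|u_n\|_H$ for every $u_n$) provided $$h\|L\|\le \lambda=\sqrt{\frac{2a_sa_{s-2}-a_{s-1}^2}{a_s^2}}.$$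
   Context: For $0\le k\le s$, $b_k=\sum_{i=\max(0,2k-s)}^{\min(2k,s)}(-1)^{k+i}a_i a_{2k-i}$. With energy $\mathcal{E}=\tfrac12\|u\|_H^2=\tfrac12\langle u,Hu\rangle$, one has $\mathcal{E}_{n+1}=\mathcal{E}_n+\tfrac12\sum_{k=1}^s b_k h^{2k}\|L^k u_n\|_H^2$. The leading index $m$ is the smallest $k\ge1$ with $b_k\ne0$ and the order of energy accuracy is $r=2m-1$. Here $\|\cdot\|_H$ is the norm $\|x\|_H=\sqrt{\langle x,Hx\rangle}$ and $\|L\|=\sup_{\|v\|_H=1}\|Lv\|_H$. *)

From HB Require Import structures.
From mathcomp Require Import all_boot all_order all_algebra.
From mathcomp Require Import boolp classical_sets reals.
Set Implicit Arguments. Unset Strict Implicit. Unset Printing Implicit Defensive.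
Import Order.TTheory GRing.Theory Num.Theory.
Local Open Scope ring_scope.
Local Open Scope classical_set_scope.

Section Defs.
Variable R : realType.

Definition bcoef (a : nat -> R) (s k : nat) : R :=
  \sum_((k.*2 - s)%N <= i < (minn k.*2 s).+1)
     (-1) ^+ (k + i) * a i * a (k.*2 - i)%N.

Definition leading_index (a : nat -> R) (s m : nat) : Prop :=
  [/\ (1 <= m <= s)%N, bcoef a s m != 0 &
      forall k, (1 <= k < m)%N -> bcoef a s k = 0].

Definition energy_order (a : nat -> R) (s r : nat) : Prop :=
  exists m, leading_index a s m /\ r = (m.*2 - 1)%N.

Variable d : nat.

Definition sym_posdef (H : 'M[R]_d) : Prop :=
  H^T = H /\ forall x : 'cV[R]_d, x != 0 -> 0 < (x^T *m H *m x) 0 0.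

Definition Hinner (H : 'M[R]_d) (x y : 'cV[R]_d) : R := (x^T *m H *m y) 0 0.

Definition Hnorm (H : 'M[R]_d) (x : 'cV[R]_d) : R := Num.sqrt (Hinner H x x).

Definition Hopnorm (H L : 'M[R]_d) : R :=
  sup [set Hnorm H (L *m v) | v in [set v : 'cV[R]_d | Hnorm H v = 1]].

Definition RKmat (a : nat -> R) (s : nat) (h : R) (L : 'M[R]_d) : 'M[R]_d :=
  \sum_(k < s.+1) a k *: (h *: L) ^+ k.

End Defs.

(* Write M = h L; it is skew-adjoint for <x, y>_H = x^T H y.  Hence the Gram
   numbers <M^i u, M^j u> only depend on i + j up to the sign (-1)^i, and they
   vanish when i + j is odd.  Expanding ||G_s u||_H^2 and regrouping along
   antidiagonals gives ||G_s u||^2 = sum_k b_k ||M^k u||^2.  For the Taylor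
   coefficients of exp, b_k is a multiple of (1 - 1)^(2k), so a fourth order
   method has b_1 = b_2 = 0; under the hypotheses only b_0 = 1, b_(s-1) < 0 and
   b_s = a_s^2 survive, whence r = 2(s-1) - 1.  Finally
   ||M^s u|| <= h ||L|| ||M^(s-1) u|| <= lambda ||M^(s-1) u|| and
   a_s^2 lambda^2 = -b_(s-1), so the last two terms add up to a nonpositive number. *)

From HB Require Import structures.
From mathcomp Require Import all_boot all_order all_algebra.
From mathcomp Require Import boolp classical_sets reals.
From mathcomp Require Import zify ring lra.
Import Order.TTheory GRing.Theory Num.Theory.
Set Implicit Arguments. Unset Strict Implicit.
Local Open Scope ring_scope.

Section HInnerProduct.
Variables (R : realType) (d : nat) (H : 'M[R]_d).

Lemma HinnerDl x1 x2 y : Hinner H (x1 + x2) y = Hinner H x1 y + Hinner H x2 y.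
Proof. by rewrite /Hinner linearD /= !mulmxDl mxE. Qed.

Lemma HinnerZl c x y : Hinner H (c *: x) y = c * Hinner H x y.
Proof. by rewrite /Hinner linearZ /= -!scalemxAl mxE. Qed.

Lemma HinnerDr x y1 y2 : Hinner H x (y1 + y2) = Hinner H x y1 + Hinner H x y2.
Proof. by rewrite /Hinner !mulmxDr mxE. Qed.

Lemma HinnerZr c x y : Hinner H x (c *: y) = c * Hinner H x y.
Proof. by rewrite /Hinner -!scalemxAr mxE. Qed.

Lemma Hinner0l y : Hinner H 0 y = 0.
Proof. by rewrite /Hinner linear0 !mul0mx mxE. Qed.

Lemma Hinner_suml n (F : 'I_n -> 'cV[R]_d) y :
  Hinner H (\sum_(i < n) F i) y = \sum_(i < n) Hinner H (F i) y.
Proof. by rewrite /Hinner linear_sum /= !mulmx_suml summxE. Qed.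

Lemma Hinner_sumr n (F : 'I_n -> 'cV[R]_d) x :
  Hinner H x (\sum_(i < n) F i) = \sum_(i < n) Hinner H x (F i).
Proof. by rewrite /Hinner mulmx_sumr summxE. Qed.

Hypothesis H_sym : H^T = H.
Hypothesis H_pos : forall x : 'cV[R]_d, x != 0 -> 0 < (x^T *m H *m x) 0 0.

Lemma HinnerC x y : Hinner H x y = Hinner H y x.
Proof.
rewrite /Hinner -[in LHS](trmxK (x^T *m H *m y)) [in LHS]mxE.
by rewrite !trmx_mul trmxK H_sym mulmxA.
Qed.

Lemma Hinner_ge0 x : 0 <= Hinner H x x.
Proof.
have [->|x_neq0] := eqVneq x 0; first by rewrite Hinner0l.
exact/ltW/H_pos.
Qed.

Lemma Hnorm_ge0 x : 0 <= Hnorm H x.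
Proof. exact: sqrtr_ge0. Qed.

Lemma sqr_Hnorm x : Hnorm H x ^+ 2 = Hinner H x x.
Proof. exact/sqr_sqrtr/Hinner_ge0. Qed.

Lemma HnormZ c x : Hnorm H (c *: x) = `|c| * Hnorm H x.
Proof. by rewrite /Hnorm HinnerZl HinnerZr mulrA -expr2 sqrtrM ?sqrtr_sqr ?sqr_ge0. Qed.

Lemma Hinner_Cauchy_Schwarz x y :
  Hinner H x y ^+ 2 <= Hinner H x x * Hinner H y y.
Proof.
have [->|y_neq0] := eqVneq y 0; first by rewrite HinnerC !Hinner0l expr0n mulr0.
have yy_gt0 : 0 < Hinner H y y := H_pos y_neq0.
(* expand  0 <= <x - t y, x - t y>  at the minimizing  t = <x, y> / <y, y> *)
set t := Hinner H x y / Hinner H y y.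
have := Hinner_ge0 (x + (- t) *: y).
rewrite !(HinnerDl, HinnerDr, HinnerZl, HinnerZr) (HinnerC y x).
have -> : Hinner H x x + - t * Hinner H x y +
    (- t * Hinner H x y + - t * (- t * Hinner H y y)) =
    (Hinner H x x * Hinner H y y - Hinner H x y ^+ 2) / Hinner H y y.
  by rewrite /t; field; rewrite gt_eqF.
by rewrite pmulr_lge0 ?invr_gt0 // subr_ge0.
Qed.

Lemma normr_Hinner_le x y : `|Hinner H x y| <= Hnorm H x * Hnorm H y.
Proof.
rewrite -sqrtr_sqr -sqrtrM ?Hinner_ge0 // ler_sqrt.
  exact: Hinner_Cauchy_Schwarz.
by rewrite mulr_ge0 ?Hinner_ge0.
Qed.

End HInnerProduct.

Section OperatorNorm.
Variables (R : realType) (d : nat) (H : 'M[R]_d).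
Hypothesis H_sym : H^T = H.
Hypothesis H_pos : forall x : 'cV[R]_d, x != 0 -> 0 < (x^T *m H *m x) 0 0.

Lemma posdef_unitmx : H \in unitmx.
Proof.
rewrite unitmxE unitfE; apply/negP => /det0P [v v_neq0 vH].
by move: (H_pos (x := v^T)); rewrite trmx_eq0 trmxK vH mul0mx mxE ltxx => /(_ v_neq0).
Qed.

Definition coord_vec (i : 'I_d) : 'cV[R]_d := invmx H *m delta_mx i 0.

Lemma Hinner_coord_vec i (v : 'cV[R]_d) : Hinner H (coord_vec i) v = v i 0.
Proof.
rewrite /Hinner; have -> : (coord_vec i)^T *m H = delta_mx 0 i.
  by rewrite -[X in _ *m X]H_sym -trmx_mul mulmxA mulmxV ?posdef_unitmx ?mul1mx ?trmx_delta.
by rewrite -rowE mxE.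
Qed.

Lemma normr_coord_le i (v : 'cV[R]_d) : `|v i 0| <= Hnorm H (coord_vec i) * Hnorm H v.
Proof. by rewrite -Hinner_coord_vec normr_Hinner_le. Qed.

Lemma Hnorm_mul_bounded (L : 'M[R]_d) :
  exists B, forall v, Hnorm H v = 1 -> Hnorm H (L *m v) <= B.
Proof.
set c := fun i => Hnorm H (coord_vec i); set A := L^T *m H *m L.
exists (Num.sqrt (\sum_j \sum_i c i * `|A i j| * c j)) => v v_unit.
have Lv_quad : Hinner H (L *m v) (L *m v) = \sum_j \sum_i v i 0 * A i j * v j 0.
  rewrite /Hinner trmx_mul !mulmxA.
  have -> : v^T *m L^T *m H *m L = v^T *m A by rewrite /A !mulmxA.
  rewrite mxE; apply: eq_bigr => j _.
  by rewrite mxE mulr_suml; apply: eq_bigr => i _; rewrite mxE.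
rewrite /Hnorm ler_sqrt ?Lv_quad; last first.
  by apply: sumr_ge0 => j _; apply: sumr_ge0 => i _; rewrite !mulr_ge0 ?Hnorm_ge0.
apply: ler_sum => j _; apply: ler_sum => i _.
apply: le_trans (ler_norm _) _; rewrite !normrM.
have := normr_coord_le i v; have := normr_coord_le j v; rewrite v_unit !mulr1.
by move=> vj vi; rewrite ler_pM ?mulr_ge0 // ler_wpM2r.
Qed.

Lemma Hnorm_mul_le (L : 'M[R]_d) v : Hnorm H (L *m v) <= Hopnorm H L * Hnorm H v.
Proof.
have [->|v_neq0] := eqVneq v 0.
  by rewrite mulmx0 /Hnorm Hinner0l sqrtr0 mulr0.
have Nv_gt0 : 0 < Hnorm H v by rewrite sqrtr_gt0; exact: H_pos.
set w := (Hnorm H v)^-1 *: v.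
have w_unit : Hnorm H w = 1 by rewrite HnormZ ger0_norm ?invr_ge0 ?ltW // mulVf ?gt_eqF.
have [B LB] := Hnorm_mul_bounded L.
have sup_Lw : Hnorm H (L *m w) <= Hopnorm H L.
  apply: sup_upper_bound; last by exists w.
  by split; [exists (Hnorm H (L *m w)), w | exists B => _ [x /LB Lx <-]].
suff -> : Hnorm H (L *m v) = Hnorm H (L *m w) * Hnorm H v by rewrite ler_wpM2r ?Hnorm_ge0.
by rewrite -scalemxAr HnormZ ger0_norm ?invr_ge0 ?Hnorm_ge0 // mulrAC mulVf ?gt_eqF ?mul1r.
Qed.

End OperatorNorm.

Section Coefficients.
Variable R : realType.
Implicit Types (a : nat -> R) (s k : nat).

Lemma signr_addnn n : (-1) ^+ (n + n) = 1 :> R.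
Proof. by rewrite -signr_odd addnn odd_double. Qed.

Lemma bcoef0 a s : a 0%N = 1 -> bcoef a s 0 = 1.
Proof. by move=> a0; rewrite /bcoef sub0n min0n big_nat1 a0 !mulr1. Qed.

Lemma bcoef_last a s : bcoef a s s = a s ^+ 2.
Proof.
rewrite /bcoef; have s2s : (s.*2 - s = s)%N by lia.
have -> : minn s.*2 s = s by lia.
by rewrite s2s big_nat1 s2s signr_addnn mul1r expr2.
Qed.

Lemma bcoef_penult a t :
  bcoef a t.+2 t.+1 = a t.+1 ^+ 2 - 2 * a t.+2 * a t.
Proof.
rewrite /bcoef; have -> : (t.+1.*2 - t.+2 = t)%N by lia.
have -> : minn t.+1.*2 t.+2 = t.+2 by lia.
rewrite big_ltn 1?ltnW // big_ltn // big_nat1.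
have -> : (t.+1.*2 - t = t.+2)%N by lia.
have -> : (t.+1.*2 - t.+1 = t.+1)%N by lia.
have -> : (t.+1.*2 - t.+2 = t)%N by lia.
have -> : (t.+1 + t = (t + t).+1)%N by lia.
have -> : (t.+1 + t.+2 = (t.+1 + t.+1).+1)%N by lia.
rewrite [(-1) ^+ (t + t).+1]exprS [(-1) ^+ (t.+1 + t.+1).+1]exprS !signr_addnn; ring.
Qed.

Lemma bcoef_exp_eq0 a s k : (0 < k)%N -> (k.*2 <= s)%N ->
  (forall i, (i <= k.*2)%N -> a i = (i`!)%:R^-1) -> bcoef a s k = 0.
Proof.
move=> k_gt0 le_ks a_exp; set n := k.*2.
have fact_neq0 m : (m`!)%:R != 0 :> R by rewrite pnatr_eq0 -lt0n fact_gt0.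
rewrite /bcoef (minn_idPl le_ks) (eqP (_ : n - s == 0)%N) ?subn_eq0 // big_mkord.
(* [b_k = (-1)^k / n! * (1 - 1)^n] by the binomial theorem *)
transitivity (\sum_(i < n.+1) (-1) ^+ k / (n`!)%:R *
                 (((-1) ^+ i * 1 ^+ (n - i) * 1 ^+ i) *+ 'C(n, i)) : R).
  apply: eq_bigr => i _; have le_in : (i <= n)%N by rewrite -ltnS.
  rewrite !a_exp ?leq_subr // !expr1n !mulr1 -mulr_natr exprD.
  have C_neq0 : 'C(n, i)%:R != 0 :> R by rewrite pnatr_eq0 -lt0n bin_gt0.
  rewrite -(bin_fact le_in) !natrM; field.
  by rewrite !fact_neq0 C_neq0.
by rewrite -mulr_sumr -exprBn subrr expr0n /= gtn_eqF ?double_gt0 ?mulr0.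
Qed.

Lemma energy_order_penult a s : (2 <= s)%N ->
  (forall k, (1 <= k <= s - 2)%N -> bcoef a s k = 0) -> bcoef a s s.-1 != 0 ->
  energy_order a s (s.*2 - 3).
Proof.
move=> s_ge2 b_low b_pen; exists s.-1; split; last by lia.
by split=> [|//|k k_lt]; [lia | apply: b_low; lia].
Qed.

End Coefficients.

Lemma sum_square_even_antidiagonals (V : nmodType) (s : nat) (G : nat -> nat -> V) :
  (forall i j, odd (i + j) -> G i j = 0) ->
  \sum_(i < s.+1) \sum_(j < s.+1) G i j =
  \sum_(k < s.+1) \sum_(k.*2 - s <= i < (minn k.*2 s).+1) G i (k.*2 - i)%N.
Proof.
move=> G_odd; under eq_bigr do rewrite -(big_mkord xpredT).
rewrite -(big_mkord xpredT (fun i => \sum_(0 <= j < s.+1) G i j)).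
rewrite -(big_mkord xpredT (fun k => \sum_(k.*2 - s <= i < (minn k.*2 s).+1) G i (k.*2 - i)%N)).
pose D i j k := if (i + j == k.*2)%N then G i j else 0.
have diag_split i j : (i <= s)%N -> (j <= s)%N ->
    G i j = \sum_(0 <= k < s.+1) D i j k.
  move=> le_is le_js; rewrite /D.
  have [ij_odd|ij_even] := boolP (odd (i + j)).
    rewrite G_odd // big1 // => k _.
    by case: eqP => // ij_k; move: ij_odd; rewrite ij_k odd_double.
  have ij_half : (i + j = ((i + j)./2).*2)%N.
    by rewrite -[LHS]odd_double_half (negbTE ij_even).
  rewrite -big_mkcond /= (eq_bigl (eq_op^~ (i + j)./2)) => [|k].
    by rewrite big_nat1_eq ifT //; lia.
  by apply/eqP/eqP; lia.
transitivity (\sum_(0 <= k < s.+1) \sum_(0 <= i < s.+1) \sum_(0 <= j < s.+1) D i j k).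
  rewrite [RHS]exchange_big_nat; apply: eq_big_nat => i /andP[_ lt_is].
  rewrite [RHS]exchange_big_nat; apply: eq_big_nat => j /andP[_ lt_js].
  exact: diag_split.
apply: eq_big_nat => k /andP[_ lt_ks].
rewrite [RHS](big_nat_widen _ _ s.+1); last by lia.
rewrite [RHS](big_nat_widenl _ 0) // [RHS]big_mkcond.
apply: eq_big_nat => i /andP[_]; rewrite ltnS => le_is.
rewrite /D -big_mkcond /=.
have [le_ik|lt_ki] := leqP i k.*2; last first.
  rewrite ltnS leq_min leqNgt lt_ki big1 // => j /eqP ij_k.
  by have := leq_addr j i; rewrite ij_k leqNgt lt_ki.
rewrite (eq_bigl (eq_op^~ (k.*2 - i)%N)) => [|j]; last first.
  by apply/eqP/eqP; lia.
by rewrite big_nat1_eq [(i < _)%N]ltnS leq_min le_ik le_is ltnS !leq_subLR addnC.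
Qed.

Section SkewAdjoint.
Variables (R : realType) (d : nat) (H M : 'M[R]_d).
Hypothesis H_sym : H^T = H.
Hypothesis M_skew : M^T *m H + H *m M = 0.

Lemma Hinner_skew x y : Hinner H (M *m x) y = - Hinner H x (M *m y).
Proof.
have MH : M^T *m H = - (H *m M) by apply/eqP; rewrite -addr_eq0 M_skew.
by rewrite /Hinner trmx_mul -(mulmxA x^T) MH mulmxN mulNmx mxE !mulmxA.
Qed.

Variable u : 'cV[R]_d.

Definition gram i j := Hinner H (M ^+ i *m u) (M ^+ j *m u).

Lemma gramSl i j : gram i.+1 j = - gram i j.+1.
Proof. by rewrite /gram !exprS -!mulmxE -!mulmxA Hinner_skew. Qed.

Lemma gram_shift i j : gram i j = (-1) ^+ i * gram 0 (i + j).
Proof.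
elim: i j => [|i IHi] j; first by rewrite mul1r.
by rewrite gramSl IHi -addSnnS exprS mulN1r mulNr.
Qed.

Lemma gram_odd i j : odd (i + j) -> gram i j = 0.
Proof.
move=> ij_odd; rewrite gram_shift -(odd_double_half (i + j)) ij_odd add1n.
set k := (i + j)./2; suff -> : gram 0 k.*2.+1 = 0 by rewrite mulr0.
(* [gram k.+1 k] and [gram k k.+1] are equal by symmetry but opposite by skewness *)
have := gram_shift k.+1 k; rewrite /gram HinnerC // -/(gram k k.+1).
rewrite gram_shift addSn addnS addnn exprS mulN1r mulNr => /eqP.
by rewrite -subr_eq0 opprK -mulr2n mulrn_eq0 mulf_eq0 signr_eq0 => /eqP.
Qed.

Lemma gram_antidiag k i : (i <= k.*2)%N ->
  gram i (k.*2 - i) = (-1) ^+ (k + i) * gram k k.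
Proof.
move=> le_ik; rewrite gram_shift subnKC // (gram_shift k) addnn mulrA -exprD.
by rewrite addnAC addnn exprD -muln2 exprM sqrr_sign mul1r.
Qed.

Lemma energy_identity (a : nat -> R) (s : nat) :
  Hinner H ((\sum_(k < s.+1) a k *: M ^+ k) *m u)
           ((\sum_(k < s.+1) a k *: M ^+ k) *m u) =
  \sum_(k < s.+1) bcoef a s k * gram k k.
Proof.
transitivity (\sum_(i < s.+1) \sum_(j < s.+1) a i * a j * gram i j).
  rewrite mulmx_suml Hinner_suml; apply: eq_bigr => i _.
  rewrite -scalemxAl HinnerZl Hinner_sumr mulr_sumr; apply: eq_bigr => j _.
  by rewrite -scalemxAl HinnerZr mulrA.
rewrite (@sum_square_even_antidiagonals _ s (fun i j => a i * a j * gram i j));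
  last by move=> i j /gram_odd->; rewrite mulr0.
apply: eq_bigr => k _; rewrite /bcoef mulr_suml; apply: eq_big_nat => i /andP[_].
by rewrite ltnS leq_min => /andP[le_ik _]; rewrite gram_antidiag //; ring.
Qed.

Lemma energy_identity_penult (a : nat -> R) (t : nat) : a 0%N = 1 ->
  (forall k, (1 <= k <= t)%N -> bcoef a t.+2 k = 0) ->
  Hinner H ((\sum_(k < t.+3) a k *: M ^+ k) *m u)
           ((\sum_(k < t.+3) a k *: M ^+ k) *m u) =
  Hinner H u u + bcoef a t.+2 t.+1 * gram t.+1 t.+1 + a t.+2 ^+ 2 * gram t.+2 t.+2.
Proof.
move=> a0 b_low; rewrite energy_identity 2!big_ord_recr big_ord_recl big1 /=.
  by rewrite bcoef0 // bcoef_last /gram expr0 mul1mx mul1r addr0.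
by move=> k _; rewrite b_low ?mul0r // /bump leq0n add1n ltn_ord.
Qed.

End SkewAdjoint.

Section Stability.
Variables (R : realType) (d : nat) (H L : 'M[R]_d).
Hypothesis H_sym : H^T = H.
Hypothesis H_pos : forall x : 'cV[R]_d, x != 0 -> 0 < (x^T *m H *m x) 0 0.
Hypothesis L_skew : L^T *m H + H *m L = 0.

Lemma RKmat_Hnorm_le (a : nat -> R) (t : nat) (h : R) :
  0 < h -> a 0%N = 1 ->
  (forall k, (1 <= k <= t)%N -> bcoef a t.+2 k = 0) -> bcoef a t.+2 t.+1 < 0 ->
  h * Hopnorm H L <= Num.sqrt ((2 * a t.+2 * a t - a t.+1 ^+ 2) / a t.+2 ^+ 2) ->
  forall u, Hnorm H (RKmat a t.+2 h L *m u) <= Hnorm H u.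
Proof.
move=> h_gt0 a0 b_low b_pen_lt0 h_le u; set M := h *: L.
have M_skew : M^T *m H + H *m M = 0.
  by rewrite /M linearZ /= -scalemxAl -scalemxAr -scalerDr L_skew scaler0.
rewrite /Hnorm ler_sqrt ?Hinner_ge0 // (energy_identity_penult H_sym M_skew) //.
set w := M ^+ t.+1 *m u; set N := Hnorm H (L *m w); set W := Hnorm H w.
have gram_pen : gram H M u t.+1 t.+1 = W ^+ 2 by rewrite sqr_Hnorm.
have gram_top : gram H M u t.+2 t.+2 = (h * N) ^+ 2.
  rewrite /gram exprS -mulmxE -mulmxA -/w -scalemxAl HinnerZl HinnerZr.
  by rewrite exprMn sqr_Hnorm // mulrA.
rewrite gram_pen gram_top; set lam := Num.sqrt _ in h_le.
have hN_le : h * N <= lam * W.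
  apply: le_trans (_ : h * (Hopnorm H L * W) <= _).
    by rewrite ler_pM2l // Hnorm_mul_le.
  by rewrite mulrA ler_wpM2r ?Hnorm_ge0.
have lam_sq : a t.+2 ^+ 2 * lam ^+ 2 <= - bcoef a t.+2 t.+1.
  rewrite bcoef_penult in b_pen_lt0 *.
  rewrite sqr_sqrtr ?divr_ge0 ?sqr_ge0 //; last by lra.
  have [a_eq0 | a_neq0] := eqVneq (a t.+2) 0.
    by move: b_pen_lt0; rewrite a_eq0 mulr0 mul0r subr0 ltNge sqr_ge0.
  by rewrite mulrCA divff ?mulr1 ?sqrf_eq0 //; lra.
have hN_sq : (h * N) ^+ 2 <= (lam * W) ^+ 2.
  by apply: lerXn2r; rewrite // nnegrE mulr_ge0 ?Hnorm_ge0 ?sqrtr_ge0 ?ltW.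
have := ler_wpM2l (sqr_ge0 (a t.+2)) hN_sq.
have := ler_wpM2r (sqr_ge0 W) lam_sq.
rewrite exprMn; lra.
Qed.

End Stability.

Theorem theorem1 (R : realType) (d : nat) (H L : 'M[R]_d)
  (s : nat) (a : nat -> R) (h : R) :
  sym_posdef H ->
  L^T *m H + H *m L = 0 ->
  (4 <= s)%N ->
  a 0%N = 1 -> a s != 0 -> 0 < h ->
  (forall k, (1 <= k <= 4)%N -> a k = (k`!)%:R^-1) ->
  (forall k, (3 <= k <= s - 2)%N -> bcoef a s k = 0) ->
  bcoef a s s.-1 < 0 ->
  energy_order a s (s.*2 - 3)%N /\
  (h * Hopnorm H L <=
     Num.sqrt ((2 * a s * a (s - 2)%N - a s.-1 ^+ 2) / a s ^+ 2) ->
   forall u : 'cV[R]_d, Hnorm H (RKmat a s h L *m u) <= Hnorm H u).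
Proof.
move=> [H_sym H_pos] L_skew s_ge4 a0 _ h_gt0 a_exp b_mid b_pen_lt0.
have b_low k : (1 <= k <= s - 2)%N -> bcoef a s k = 0.
  move=> /andP[k_ge1 le_ks]; have [le_k2|lt_2k] := leqP k 2; last by apply: b_mid; lia.
  apply: bcoef_exp_eq0 => [||[_|i le_i]]; [lia | lia | by rewrite a0 invr1 | ].
  by apply: a_exp; lia.
split; first by apply: energy_order_penult; rewrite ?ltr0_neq0 //; lia.
have [t s_eq] : exists t, s = t.+2 by exists (s - 2)%N; lia.
move: b_low b_pen_lt0; rewrite s_eq !subSS subn0 /= => b_low b_pen_lt0.
exact: RKmat_Hnorm_le.
Qed.
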